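(* (i) Let $(s,p)\in R_{\Lambda,i}$. Then \[ \frac{\prod_{p'=1}^{i+1}L^{(s)}_{+,p'}}{\prod_{1\le p'\le i,\ p'\ne p}(\nu^{(s)}_{i,p}-\nu^{(s)}_{i,p'})}=\hbar'^2(p-i-1), \] and for $s'\ne s$, with $\Delta=a_s-a_{s'}$, \[ \frac{\prod_{p'=1}^{i+1}L^{(s')}_{+,p'}}{\prod_{p'=1}^{i}(\nu^{(s)}_{i,p}-\nu^{(s')}_{i,p'})}=\begin{cases}\hbar'(p-i-1)-\Delta&\text{if }l^{(s')}_{i+1}=l^{(s')}_i,\\ \hbar'(p-i)-\Delta&\text{if }l^{(s')}_{i+1}=l^{(s')}_i+1,\ l^{(s')}_i=i,\\ \dfrac{(\hbar'(p-l^{(s')}_i)-\Delta)(\hbar'(p-i-1)-\Delta)}{\hbar'(p-l^{(s')}_i-1)-\Delta}&\text{if }l^{(s')}_{i+1}=l^{(s')}_i+1,\ l^{(s')}_i\ne i.\end{cases} \] (ii) Let $(s,p)\in A_{\Lambda,i}$. Then \[ \frac{\prod_{p'=1}^{i-1}L^{(s)}_{-,p'}}{\prod_{1\le p'\le i,\ p'\ne p}(\nu^{(s)}_{i,p}-\nu^{(s)}_{i,p'})}=-\frac1{p-i-1}, \] and for $s'\ne s$, with $\Delta=a_s-a_{s'}$, \[ \frac{\prod_{p'=1}^{i-1}L^{(s')}_{-,p'}}{\prod_{p'=1}^{i}(\nu^{(s)}_{i,p}-\nu^{(s')}_{i,p'})}=\begin{cases}\dfrac1{\hbar'(p-i-1)-\Delta}&\text{if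 }l^{(s')}_{i-1}=l^{(s')}_i,\\ \dfrac1{\hbar'(p-i)-\Delta}&\text{if }l^{(s')}_{i-1}=l^{(s')}_i-1,\ l^{(s')}_i=i,\\ \dfrac{\hbar'(p-l^{(s')}_i-1)-\Delta}{(\hbar'(p-l^{(s')}_i)-\Delta)(\hbar'(p-i-1)-\Delta)}&\text{if }l^{(s')}_{i-1}=l^{(s')}_i-1,\ l^{(s')}_i\ne i.\end{cases} \]
   Context: Work over $\mathbb{C}(\varepsilon_1,\varepsilon_2)$ with $\hbar'=-(\varepsilon_1+\varepsilon_2)$, $t=N\varepsilon_2$, $N\ge2$. Fix $l\ge1$, integers $1\le p_1,\dots,p_l\le N$ and integers $r_1<\dots<r_l$, and set $a_s=tr_s+\hbar'(p_1+\cdots+p_s-\frac32)$. Let $\mathcal S$ be the set of collections of integers $\Lambda=(\lambda^{(s)}_{i,p})$, $1\le s\le l$, $1\le i\le N$, $1\le p\le i$, with $\lambda^{(s)}_{N,p}=1$ for $p\le p_s$ and $0$ for $p>p_s$, and $\lambda^{(s)}_{i,p}\ge\lambda^{(s)}_{i-1,p}\ge\lambda^{(s)}_{i,p+1}$ (so all entries are $0$ or $1$); put $\lambda^{(s)}_{i,p}=0$ for $p>i$. Let $l^{(s)}_i$ be the number of $p$ with $\lambda^{(s)}_{i,p}=1$. For $\Lambda\in\mathcal S$ and $1\le i\le N-1$, $\Lambda\pm\delta^{(s)}_{i,p}$ denotes $\Lambda$ with the $(s,i,p)$ entry changed by $\pm1$; $R_{\Lambda,i}=\{(s,p):\Lambda+\delta^{(s)}_{i,p}\in\mathcal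 S\}$, $A_{\Lambda,i}=\{(s,p):\Lambda-\delta^{(s)}_{i,p}\in\mathcal S\}$. Set $\nu^{(s)}_{i,p}=\hbar'(p-1-\lambda^{(s)}_{i,p})-a_s$, and for fixed $(s,i,p)$ and any $(s',p')$: $L^{(s')}_{+,p'}=\hbar'(p-p'+\lambda^{(s')}_{i+1,p'})-(a_s-a_{s'})$, $L^{(s')}_{-,p'}=\hbar'(p-p'-1+\lambda^{(s')}_{i-1,p'})-(a_s-a_{s'})$ (empty products are $1$). *)

(* Base field: C(eps1, eps2), realised as the field of
   fractions of the bivariate polynomial ring C[eps1][eps2], where C is
   the field of complex numbers  complex R  over Stdlib's reals R. *)
From HB Require Import structures.
From mathcomp Require Import all_boot all_order all_algebra.
From mathcomp Require Import fraction complex.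
From mathcomp Require Import Rstruct.
Set Implicit Arguments. Unset Strict Implicit. Unset Printing Implicit Defensive.
Import Order.TTheory GRing.Theory Num.Theory.
Local Open Scope ring_scope.

Definition Cx : fieldType := (Rdefinitions.R)[i].
Definition Kpoly : idomainType := {poly {poly Cx}}.
Definition K : fieldType := {fraction Kpoly}.

Definition eps1 : K := tofrac (('X : {poly Cx})%:P : Kpoly).
Definition eps2 : K := tofrac ('X : Kpoly).
Definition hbar' : K := - (eps1 + eps2).
Definition tpar (N : nat) : K := N%:R * eps2.

(* A collection Lambda = (lambda^{(s)}_{i,p}) is a function s i p |-> integer;
   only the entries with 1 <= p <= i matter, the others are 0 by convention. *)
Definition pattern := nat -> nat -> nat -> int.

Definition ent (L : pattern) (s i p : nat) : int :=
  if (1 <= p <= i)%N then L s i p else 0.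

Definition inS (N l : nat) (ps : nat -> nat) (L : pattern) : Prop :=
  forall s, (1 <= s <= l)%N ->
    (forall p, (1 <= p <= N)%N -> ent L s N p = (if (p <= ps s)%N then 1 else 0)) /\
    (forall i p, (2 <= i <= N)%N -> (1 <= p < i)%N ->
        ent L s (i.-1) p <= ent L s i p /\ ent L s i p.+1 <= ent L s (i.-1) p).

Definition shift (L : pattern) (s i p : nat) (d : int) : pattern :=
  fun s' i' p' => if [&& s' == s, i' == i & p' == p] then L s' i' p' + d
                  else L s' i' p'.

Definition lcnt (L : pattern) (s i : nat) : nat :=
  \sum_(1 <= p < i.+1) (ent L s i p == 1 :> int).

Definition aa (N : nat) (ps : nat -> nat) (r : nat -> int) (s : nat) : K :=
  tpar N * (r s)%:~R + hbar' * ((\sum_(1 <= k < s.+1) ps k)%:R - 3%:R / 2%:R).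

Definition nu N ps r (L : pattern) (s i p : nat) : K :=
  hbar' * (p%:R - 1 - (ent L s i p)%:~R) - aa N ps r s.

Definition Lplus N ps r (L : pattern) (s i p s' p' : nat) : K :=
  hbar' * (p%:R - p'%:R + (ent L s' i.+1 p')%:~R) - (aa N ps r s - aa N ps r s').
Definition Lminus N ps r (L : pattern) (s i p s' p' : nat) : K :=
  hbar' * (p%:R - p'%:R - 1 + (ent L s' i.-1 p')%:~R) - (aa N ps r s - aa N ps r s').

(* A pattern in S has 0/1 entries that are non-increasing along each row, so row i
   of colour s is the step function p |-> [p <= l^(s)_i].  Hence each factor
   L^(s')_(+-,p') and nu^(s)_(i,p) - nu^(s')_(i,p') equals hbar' z - Delta for an
   integer z which, as p' = 1, 2, ..., runs through c, c - 1, c - 2, ... except that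
   the single value c - l (l the relevant row count) is skipped.  A product of such
   factors is thus a falling product with one factor omitted, and in each ratio
   numerator and denominator cancel down to at most three factors.  Raising
   (resp. lowering) the entry (s,i,p) pins down the row counts of colour s:
   l_i = p - 1 and l_(i+1) = p (resp. l_i = p and l_(i-1) = p - 1).  No factor
   vanishes, because eps1 and eps2 are linearly independent over Z and the
   eps2-coefficient of a_s - a_s' is N (r_s - r_s') <> 0 for s <> s'. *)
From HB Require Import structures.
From mathcomp Require Import all_boot all_order all_algebra.
From mathcomp Require Import fraction complex.
From mathcomp Require Import Rstruct.
From mathcomp Require Import ring zify.
Import Order.TTheory GRing.Theory Num.Theory.
Local Open Scope ring_scope.
Set Implicit Arguments.
Unset Strict Implicit.

Definition step (k j : nat) : int := (0 < j <= k)%N.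

Section StepProducts.
Variables (F : fieldType) (f : int -> F).

Lemma prod_step (c : int) (k b : nat) : (k < b)%N ->
  (\prod_(1 <= j < b) f (c - j%:Z + step k j)) * f (c - k%:Z)
  = \prod_(0 <= j < b) f (c - j%:Z).
Proof.
move=> ltkb; rewrite (@big_cat_nat _ _ _ k.+1) //= [RHS](@big_cat_nat _ _ _ k.+1) //=.
rewrite [in RHS]big_nat_recr //= big_add1 /= mulrAC; congr (_ * _ * _).
- by apply: eq_big_nat => j /andP[_ ltjk]; congr f; rewrite /step; lia.
- by apply: eq_big_nat => j /andP[ltkj _]; congr f; rewrite /step; lia.
Qed.

Lemma prod_punctured (u v : nat -> F) (a b k : nat) : (a <= k < b)%N ->
  (forall j, j != k -> u j = v j) ->
  \prod_(a <= j < b) u j = u k * \prod_(a <= j < b | j != k) v j.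
Proof.
move=> hk huv; rewrite (bigD1_seq k) ?mem_index_iota ?iota_uniq //=.
by congr (_ * _); apply: eq_bigr => j; apply: huv.
Qed.

Lemma prod_f_neq0 (P : pred nat) (g : nat -> int) (a b : nat) :
  (forall z, f z != 0) -> \prod_(a <= j < b | P j) f (g j) != 0.
Proof. by move=> f_neq0; rewrite prodf_seq_neq0; apply/allP => j _; rewrite f_neq0 implybT. Qed.

Lemma prod_step_ratio_up (u v : nat -> F) (c : int) (i n m : nat) :
  (forall z, f z != 0) -> (m <= i)%N -> (n <= i.+1)%N ->
  (forall j, u j = f (c - j%:Z + step n j)) ->
  (forall j, v j = f (c - j%:Z + step m j)) ->
  (\prod_(1 <= j < i.+2) u j) / (\prod_(1 <= j < i.+1) v j)
  = f (c - m%:Z) * f (c - i.+1%:Z) / f (c - n%:Z).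
Proof.
move=> f_neq0 le_mi le_ni hu hv.
rewrite (eq_bigr _ (fun j _ => hu j)) (eq_bigr _ (fun j _ => hv j)).
apply/eqP; rewrite eqr_div ?f_neq0 ?prod_f_neq0 //.
rewrite prod_step // big_nat_recr //= -(@prod_step c m) //.
by apply/eqP; ring.
Qed.

Lemma prod_step_ratio_down (u v : nat -> F) (c : int) (i n m : nat) :
  (forall z, f z != 0) -> (m <= i)%N -> (n < i)%N ->
  (forall j, u j = f (c - j%:Z + step n j)) ->
  (forall j, v j = f (c - j%:Z + step m j)) ->
  (\prod_(1 <= j < i) u j) / (\prod_(1 <= j < i.+1) v j)
  = f (c - m%:Z) / (f (c - n%:Z) * f (c - i%:Z)).
Proof.
move=> f_neq0 le_mi lt_ni hu hv.
rewrite (eq_bigr _ (fun j _ => hu j)) (eq_bigr _ (fun j _ => hv j)).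
apply/eqP; rewrite eqr_div ?mulf_neq0 ?f_neq0 ?prod_f_neq0 //.
rewrite mulrA prod_step // -big_nat_recr //= -(@prod_step c m) //.
by apply/eqP; ring.
Qed.

Lemma prod_step_ratio_up_punctured (u v : nat -> F) (p i : nat) :
  (forall z, z != 0 -> f z != 0) -> (1 <= p <= i)%N ->
  (forall j, u j = f (p%:Z - j%:Z + step p j)) ->
  (forall j, j != p -> v j = f (p%:Z - j%:Z + step p.-1 j)) ->
  (\prod_(1 <= j < i.+2) u j) / (\prod_(1 <= j < i.+1 | j != p) v j)
  = f 1 * f (p%:Z - i.+1%:Z).
Proof.
move=> f_neq0 hp hu hv.
have huv j : j != p -> u j = v j by move=> ne; rewrite hu hv //; congr f; rewrite /step; lia.
have den_neq0 : \prod_(1 <= j < i.+1 | j != p) v j != 0.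
  rewrite prodf_seq_neq0; apply/allP => j /[!mem_index_iota] hj; apply/implyP => ne.
  by rewrite hv // f_neq0 //; rewrite /step; lia.
rewrite big_nat_recr //= (@prod_punctured u v 1 i.+1 p _ huv); last by lia.
by rewrite mulrAC mulfK // !hu; congr (f _ * f _); rewrite /step; lia.
Qed.

Lemma prod_step_ratio_down_punctured (u v : nat -> F) (p i : nat) :
  (forall z, z != 0 -> f z != 0) -> (1 <= p <= i)%N ->
  (forall j, u j = f (p%:Z - 1 - j%:Z + step p.-1 j)) ->
  (forall j, j != p -> v j = f (p%:Z - 1 - j%:Z + step p j)) ->
  (\prod_(1 <= j < i) u j) / (\prod_(1 <= j < i.+1 | j != p) v j)
  = f (-1) / f (p%:Z - 1 - i%:Z).
Proof.
move=> f_neq0 hp hu hv.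
have huv j : j != p -> u j = v j by move=> ne; rewrite hu hv //; congr f; rewrite /step; lia.
have den_neq0 : \prod_(1 <= j < i.+1 | j != p) v j != 0.
  rewrite prodf_seq_neq0; apply/allP => j /[!mem_index_iota] hj; apply/implyP => ne.
  by rewrite hv // f_neq0 //; rewrite /step; lia.
have ui : u i = f (p%:Z - 1 - i%:Z) by rewrite hu; congr f; rewrite /step; lia.
apply/eqP; rewrite eqr_div ?f_neq0 //; last by lia.
rewrite -ui -big_nat_recr //=; last by lia.
rewrite (@prod_punctured u v 1 i.+1 p _ huv) ?hu; last by lia.
by apply/eqP; congr (f _ * _); rewrite /step; lia.
Qed.

End StepProducts.

Lemma divMl_N1 (F : fieldType) (h x : F) : h != 0 -> (h * (-1)%:~R) / (h * x) = - (1 / x).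
Proof. by move=> h_neq0; rewrite invfM mulrACA mulfV // mul1r; ring. Qed.

Lemma Cx_intr_eq0 (z : int) : ((z%:~R : Cx) == 0) = (z == 0).
Proof. exact: (@intr_eq0 (Rdefinitions.R)[i]). Qed.

Lemma eps_lin_indep (a b : int) : a%:~R * eps1 + b%:~R * eps2 = 0 -> a = 0 /\ b = 0.
Proof.
have tofrac_int (z : int) : (z%:~R : K) = tofrac (z%:~R : Kpoly) by rewrite rmorph_int.
rewrite /eps1 /eps2 !tofrac_int -!tofracM -tofracD => /eqP; rewrite tofrac_eq0 => /eqP h.
have := congr1 (fun q : Kpoly => q`_1) h; have := congr1 (fun q : Kpoly => q`_0) h.
rewrite /= !mulrzl !coefD !coef0 !coefMrz !coefC !coefX /= !mul0rz addr0 add0r.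
move=> /(congr1 (fun q : {poly Cx} => q`_1)) /eqP; rewrite /= coefMrz coefX coef0 Cx_intr_eq0.
move=> /eqP a0 /(congr1 (fun q : {poly Cx} => q`_0)) /eqP; rewrite /= coefMrz coefC coef0.
by rewrite Cx_intr_eq0 => /eqP.
Qed.

Lemma Kintr_eq0 (z : int) : ((z%:~R : K) == 0) = (z == 0).
Proof.
apply/eqP/eqP => [z0 | ->]; last by [].
have [] // : z = 0 /\ 0 = 0 :> int.
by apply: eps_lin_indep; rewrite z0; ring.
Qed.

Lemma hbar_neq0 : hbar' != 0.
Proof.
apply/eqP => h0; have [] // : (-1 = 0 :> int) /\ (-1 = 0 :> int).
by apply: eps_lin_indep; rewrite -[RHS]h0 /hbar'; ring.
Qed.

Definition lin (D : K) (z : int) : K := hbar' * z%:~R - D.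

Lemma lin0_neq0 (z : int) : z != 0 -> lin 0 z != 0.
Proof. by move=> z_neq0; rewrite /lin subr0 mulf_neq0 ?hbar_neq0 ?Kintr_eq0. Qed.

Lemma lin0_N1_div (z : int) : lin 0 (-1) / lin 0 z = - (1 / z%:~R).
Proof. rewrite /lin !subr0; apply: divMl_N1; exact: hbar_neq0. Qed.

Lemma lin_aa_neq0 N ps r s s' (z : int) : (0 < N)%N -> r s != r s' ->
  lin (aa N ps r s - aa N ps r s') z != 0.
Proof.
move=> N_gt0 rs_neq; apply/eqP => h.
set S := (\sum_(1 <= k < s.+1) ps k)%N; set S' := (\sum_(1 <= k < s'.+1) ps k)%N.
pose a : int := S%:Z - S'%:Z - z.
have [a0 b0] : a = 0 /\ a - N%:Z * (r s - r s') = 0.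
  by apply: eps_lin_indep; rewrite -h /lin /aa /tpar /hbar' /a -/S -/S'; ring.
move: b0; rewrite a0 sub0r => /eqP; rewrite oppr_eq0 mulf_eq0 subr_eq0.
by rewrite (negbTE rs_neq) orbF => /eqP; lia.
Qed.

Lemma incr_neq (l : nat) (r : nat -> int) s s' :
  (forall k, (1 <= k)%N -> (k < l)%N -> r k < r k.+1) ->
  (1 <= s <= l)%N -> (1 <= s' <= l)%N -> s' != s -> r s != r s'.
Proof.
move=> r_incr hs hs' ne.
have r_lt : {in [pred k | 1 <= k <= l]%N &, {homo r : a b / (a < b)%N >-> a < b}}.
  apply: homo_ltn_in => [y x z|a b ha hb k hk|a]; first exact: lt_trans.
    by rewrite !inE in ha hb *; lia.
  by rewrite !inE => ha hb; apply: r_incr; lia.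
case: (ltngtP s s') ne => // [lt_ss' | lt_s's] _.
  by rewrite lt_eqF // r_lt ?inE.
by rewrite gt_eqF // r_lt ?inE.
Qed.

Lemma step_of_01_noninc (g : nat -> int) (n : nat) :
  (forall p, (1 <= p <= n)%N -> g p = 0 \/ g p = 1) ->
  (forall p, (1 <= p < n)%N -> g p.+1 <= g p) ->
  exists2 m, (m <= n)%N & forall p, (1 <= p <= n)%N -> g p = step m p.
Proof.
elim: n => [|n IH] g01 g_noninc; first by exists 0%N => // p; lia.
have [m le_mn gE] := IH (fun p hp => g01 p ltac:(lia)) (fun p hp => g_noninc p ltac:(lia)).
have [g0 | g1] := g01 n.+1 ltac:(lia).
  exists m => [|p hp]; first lia.
  have [-> | le_pn] : p = n.+1 \/ (p <= n)%N by lia.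
    by rewrite g0 /step; lia.
  by rewrite gE //; lia.
have mn : m = n.
  have [n0 | n_gt0] := posnP n; first lia.
  by have := g_noninc n ltac:(lia); rewrite g1 gE /step; lia.
exists n.+1 => // p hp.
have [-> | le_pn] : p = n.+1 \/ (p <= n)%N by lia.
  by rewrite g1 /step; lia.
by rewrite gE /step; lia.
Qed.

Lemma lcnt_le L s i : (lcnt L s i <= i)%N.
Proof.
apply: (@leq_trans (\sum_(1 <= p < i.+1) 1)%N); first by apply: leq_sum => p _; apply: leq_b1.
by rewrite sum_nat_const_nat; lia.
Qed.

Lemma lcnt_step L s i m : (m <= i)%N ->
  (forall p, (1 <= p <= i)%N -> ent L s i p = step m p) -> lcnt L s i = m.
Proof.
move=> le_mi entE; rewrite /lcnt (@big_cat_nat _ _ _ m.+1) /=; [| lia | lia].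
rewrite (eq_big_nat _ _ (F2 := fun _ => 1%N)); last by move=> p hp; rewrite entE /step; lia.
rewrite [X in (_ + X)%N](eq_big_nat _ _ (F2 := fun _ => 0%N)); last first.
  by move=> p hp; rewrite entE /step; lia.
by rewrite !sum_nat_const_nat; lia.
Qed.

Lemma ent_shift_same L s i p d : (1 <= p <= i)%N ->
  ent (shift L s i p d) s i p = ent L s i p + d.
Proof. by move=> hp; rewrite /ent /shift hp !eqxx. Qed.

Lemma ent_shift_ne L s i p d i' p' : (i' != i) || (p' != p) ->
  ent (shift L s i p d) s i' p' = ent L s i' p'.
Proof. by move=> ne; rewrite /ent /shift eqxx /=; case: (i' == i) (p' == p) ne => [] []. Qed.

Section PatternRows.
Variables (N l : nat) (ps : nat -> nat) (L : pattern).
Hypothesis HL : inS N l ps L.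
Variable s : nat.
Hypothesis Hs : (1 <= s <= l)%N.

Lemma ent_01 i p : (1 <= i <= N)%N -> (1 <= p <= i)%N -> ent L s i p = 0 \/ ent L s i p = 1.
Proof.
move=> hi; have [k [-> lt_kN]] : exists k, i = (N - k)%N /\ (k < N)%N.
  by exists (N - i)%N; lia.
elim: k lt_kN p {hi} => [|k IH] lt_kN p hp.
  by rewrite subn0 (HL Hs).1; [case: ifP; [right | left] | lia].
have [lower upper] := (HL Hs).2 (N - k)%N p ltac:(lia) ltac:(lia).
rewrite (_ : N - k.+1 = (N - k).-1)%N; last by lia.
by have := IH ltac:(lia) p ltac:(lia); have := IH ltac:(lia) p.+1 ltac:(lia); lia.
Qed.

Lemma ent_noninc i p : (1 <= i <= N)%N -> (1 <= p < i)%N -> ent L s i p.+1 <= ent L s i p.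
Proof.
move=> hi hp; have [-> | ltiN] : i = N \/ (i < N)%N by lia.
  by rewrite !(HL Hs).1; [case: ifP; case: ifP; lia | lia | lia].
have [_ up] := (HL Hs).2 i.+1 p ltac:(lia) ltac:(lia).
have [low _] := (HL Hs).2 i.+1 p.+1 ltac:(lia) ltac:(lia).
move: up low => /=; lia.
Qed.

Lemma ent_lcnt i p : (i <= N)%N -> ent L s i p = step (lcnt L s i) p.
Proof.
move=> le_iN; have [-> | i_gt0] := posnP i.
  by rewrite /ent /lcnt big_geq //= /step; case: ifP; lia.
have hi : (1 <= i <= N)%N by lia.
have [m le_mi entE] := step_of_01_noninc (fun p => ent_01 (p := p) hi) (fun p => ent_noninc (p := p) hi).
rewrite (lcnt_step le_mi entE).
have [p_in | p_out] := boolP (1 <= p <= i)%N; first exact: entE.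
by rewrite /ent (negbTE p_out) /step; lia.
Qed.

End PatternRows.

Lemma lcnt_raise N l ps L s i p :
  inS N l ps L -> inS N l ps (shift L s i p 1) -> (1 <= s <= l)%N ->
  (i < N)%N -> (1 <= p <= i)%N -> lcnt L s i = p.-1 /\ lcnt L s i.+1 = p.
Proof.
move=> HL HL' Hs ltiN hp.
have row := ent_lcnt HL Hs; have row' := ent_lcnt HL' Hs.
have at_p := ent_shift_same L s 1 hp.
have before_p : ent (shift L s i p 1) s i p.-1 = ent L s i p.-1.
  by apply: ent_shift_ne; apply/orP; right; apply/eqP; lia.
have next_row : ent (shift L s i p 1) s i.+1 p = ent L s i.+1 p.
  by apply: ent_shift_ne; rewrite gtn_eqF.
have [up' _] := (HL' s Hs).2 i.+1 p ltac:(lia) ltac:(lia).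
have [_ down] := (HL s Hs).2 i.+1 p ltac:(lia) ltac:(lia).
move: at_p before_p next_row up' down => /=.
rewrite !row ?row' /step; lia.
Qed.

Lemma lcnt_lower N l ps L s i p :
  inS N l ps L -> inS N l ps (shift L s i p (-1)) -> (1 <= s <= l)%N ->
  (i <= N)%N -> (1 <= p <= i)%N -> lcnt L s i = p /\ lcnt L s i.-1 = p.-1.
Proof.
move=> HL HL' Hs leiN hp.
have row := ent_lcnt HL Hs; have row' := ent_lcnt HL' Hs.
have at_p := ent_shift_same L s (-1) hp.
have after_p : ent (shift L s i p (-1)) s i p.+1 = ent L s i p.+1.
  by apply: ent_shift_ne; apply/orP; right; apply/eqP; lia.
have prev_row : ent (shift L s i p (-1)) s i.-1 p = ent L s i.-1 p.
  by apply: ent_shift_ne; apply/orP; left; apply/eqP; lia.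
have up' : (p < i)%N ->
    ent (shift L s i p (-1)) s i.-1 p <= ent (shift L s i p (-1)) s i p.
  by move=> ltpi; have [] := (HL' s Hs).2 i p ltac:(lia) ltac:(lia).
have down : (1 < p)%N -> ent L s i p <= ent L s i.-1 p.-1.
  move=> p_gt1; have [_] := (HL s Hs).2 i p.-1 ltac:(lia) ltac:(lia).
  by rewrite prednK //; lia.
have lcnt_pred := lcnt_le L s i.-1.
move: at_p after_p prev_row up' down; rewrite !row ?row' /step; lia.
Qed.

Section Ratios.
Variables (N l : nat) (ps : nat -> nat) (r : nat -> int) (L : pattern) (s i p : nat).
Hypotheses (HL : inS N l ps L) (Hs : (1 <= s <= l)%N) (Hp : (1 <= p <= i)%N).
Local Notation a := (aa N ps r).

Lemma Lplus_lin s' j :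
  Lplus N ps r L s i p s' j = lin (a s - a s') (p%:Z - j%:Z + ent L s' i.+1 j).
Proof. by rewrite /Lplus /lin; ring. Qed.

Lemma Lminus_lin s' j :
  Lminus N ps r L s i p s' j = lin (a s - a s') (p%:Z - 1 - j%:Z + ent L s' i.-1 j).
Proof. by rewrite /Lminus /lin; ring. Qed.

Lemma nu_sub_lin s' j : nu N ps r L s i p - nu N ps r L s' i j
  = lin (a s - a s') (p%:Z - j%:Z - ent L s i p + ent L s' i j).
Proof. by rewrite /nu /lin; ring. Qed.

Lemma raise_ratio_same : (i < N)%N -> lcnt L s i = p.-1 -> lcnt L s i.+1 = p ->
  (\prod_(1 <= p' < i.+2) Lplus N ps r L s i p s p')
    / (\prod_(1 <= p' < i.+1 | p' != p) (nu N ps r L s i p - nu N ps r L s i p'))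
  = hbar' ^+ 2 * (p%:R - i%:R - 1).
Proof.
move=> ltiN li li1.
have ent_i j : ent L s i j = step p.-1 j by rewrite (ent_lcnt HL Hs) ?li //; lia.
rewrite (@prod_step_ratio_up_punctured _ (lin 0) (Lplus N ps r L s i p s)
  (fun j => nu N ps r L s i p - nu N ps r L s i j) p i lin0_neq0 Hp).
- by rewrite /lin; ring.
- by move=> j; rewrite Lplus_lin subrr (ent_lcnt HL Hs) ?li1.
- by move=> j _; rewrite nu_sub_lin subrr !ent_i; congr lin; rewrite /step; lia.
Qed.

Lemma raise_ratio_other s' : (i < N)%N -> lcnt L s i = p.-1 ->
  (1 <= s' <= l)%N -> r s != r s' ->
  let D := a s - a s' in
  let lhs := (\prod_(1 <= p' < i.+2) Lplus N ps r L s i p s' p')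
    / (\prod_(1 <= p' < i.+1) (nu N ps r L s i p - nu N ps r L s' i p')) in
  let li := lcnt L s' i in
  [/\ lcnt L s' i.+1 = li -> lhs = hbar' * (p%:R - i%:R - 1) - D,
      lcnt L s' i.+1 = li.+1 -> li = i -> lhs = hbar' * (p%:R - i%:R) - D &
      lcnt L s' i.+1 = li.+1 -> li <> i ->
        lhs = (hbar' * (p%:R - li%:R) - D) * (hbar' * (p%:R - i%:R - 1) - D)
              / (hbar' * (p%:R - li%:R - 1) - D)].
Proof.
move=> ltiN li_s hs' rs_neq D lhs li.
have lin_neq0 z : lin D z != 0 by apply: lin_aa_neq0 => //; lia.
have ent_s : ent L s i p = 0 by rewrite (ent_lcnt HL Hs) ?li_s /step; lia.
have -> : lhs = lin D (p%:Z - li%:Z) * lin D (p%:Z - i.+1%:Z)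
                / lin D (p%:Z - (lcnt L s' i.+1)%:Z).
  apply: (prod_step_ratio_up (u := Lplus N ps r L s i p s')
    (v := fun j => nu N ps r L s i p - nu N ps r L s' i j)) lin_neq0
    (lcnt_le _ _ _) (lcnt_le _ _ _) _ _ => j.
    by rewrite Lplus_lin (ent_lcnt HL hs').
  by rewrite nu_sub_lin ent_s subr0 (ent_lcnt HL hs'); last lia.
rewrite /li; split=> [-> | -> -> | -> _].
- by rewrite mulrC mulKf ?lin_neq0 /lin; ring.
- by rewrite mulfK ?lin_neq0 /lin; ring.
- by rewrite /lin; congr (_ * _ / _); ring.
Qed.

Lemma lower_ratio_same : (i <= N)%N -> lcnt L s i = p -> lcnt L s i.-1 = p.-1 ->
  (\prod_(1 <= p' < i) Lminus N ps r L s i p s p')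
    / (\prod_(1 <= p' < i.+1 | p' != p) (nu N ps r L s i p - nu N ps r L s i p'))
  = - (1 / (p%:R - i%:R - 1)).
Proof.
move=> leiN li lim1.
have ent_i j : ent L s i j = step p j by rewrite (ent_lcnt HL Hs) ?li.
rewrite (@prod_step_ratio_down_punctured _ (lin 0) (Lminus N ps r L s i p s)
  (fun j => nu N ps r L s i p - nu N ps r L s i j) p i lin0_neq0 Hp).
- by rewrite lin0_N1_div; congr (- (1 / _)); ring.
- by move=> j; rewrite Lminus_lin subrr (ent_lcnt HL Hs) ?lim1; last lia.
- by move=> j _; rewrite nu_sub_lin subrr !ent_i; congr lin; rewrite /step; lia.
Qed.

Lemma lower_ratio_other s' : (i <= N)%N -> lcnt L s i = p ->
  (1 <= s' <= l)%N -> r s != r s' ->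
  let D := a s - a s' in
  let lhs := (\prod_(1 <= p' < i) Lminus N ps r L s i p s' p')
    / (\prod_(1 <= p' < i.+1) (nu N ps r L s i p - nu N ps r L s' i p')) in
  let li := lcnt L s' i in
  [/\ lcnt L s' i.-1 = li -> lhs = 1 / (hbar' * (p%:R - i%:R - 1) - D),
      lcnt L s' i.-1 = li.-1 -> (1 <= li)%N -> li = i ->
        lhs = 1 / (hbar' * (p%:R - i%:R) - D) &
      lcnt L s' i.-1 = li.-1 -> (1 <= li)%N -> li <> i ->
        lhs = (hbar' * (p%:R - li%:R - 1) - D)
              / ((hbar' * (p%:R - li%:R) - D) * (hbar' * (p%:R - i%:R - 1) - D))].
Proof.
move=> leiN li_s hs' rs_neq D lhs li.
have lin_neq0 z : lin D z != 0 by apply: lin_aa_neq0 => //; lia.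
have ent_s : ent L s i p = 1 by rewrite (ent_lcnt HL Hs) ?li_s /step; lia.
have -> : lhs = lin D (p%:Z - 1 - li%:Z)
                / (lin D (p%:Z - 1 - (lcnt L s' i.-1)%:Z) * lin D (p%:Z - 1 - i%:Z)).
  have lt_pred_i : (lcnt L s' i.-1 < i)%N by have := lcnt_le L s' i.-1; lia.
  apply: (prod_step_ratio_down (u := Lminus N ps r L s i p s')
    (v := fun j => nu N ps r L s i p - nu N ps r L s' i j)) lin_neq0
    (lcnt_le _ _ _) lt_pred_i _ _ => j.
    by rewrite Lminus_lin (ent_lcnt HL hs'); last lia.
  by rewrite nu_sub_lin ent_s (ent_lcnt HL hs'); [congr lin; lia | lia].
rewrite /li; split=> [-> | -> _ -> | -> li_gt0 _].
- by rewrite invfM mulrA (mulfV (lin_neq0 _)) ?mul1r /lin; congr _^-1; ring.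
- rewrite invfM mulrCA (mulfV (lin_neq0 _)) mulr1 div1r.
  rewrite (_ : p%:Z - 1 - i.-1%:Z = p%:Z - i%:Z); last by lia.
  by rewrite /lin; congr _^-1; ring.
- rewrite (_ : p%:Z - 1 - (lcnt L s' i).-1%:Z = p%:Z - (lcnt L s' i)%:Z); last by lia.
  by rewrite /lin; congr (_ / (_ * _)); ring.
Qed.

End Ratios.

Unset Implicit Arguments.

Theorem lemma3p2 (N l : nat) (ps : nat -> nat) (r : nat -> int)
  (HN : (2 <= N)%N) (Hl : (1 <= l)%N)
  (Hps : forall s, (1 <= s <= l)%N -> (1 <= ps s <= N)%N)
  (Hr : forall s, (1 <= s)%N -> (s < l)%N -> r s < r s.+1)
  (L : pattern) (HL : inS N l ps L)
  (i : nat) (Hi : (1 <= i <= N - 1)%N)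
  (s p : nat) (Hs : (1 <= s <= l)%N) (Hp : (1 <= p <= i)%N) :
  (* (i) (s,p) \in R_{Lambda,i} *)
  (inS N l ps (shift L s i p 1) ->
     (\prod_(1 <= p' < i.+2) Lplus N ps r L s i p s p')
       / (\prod_(1 <= p' < i.+1 | p' != p) (nu N ps r L s i p - nu N ps r L s i p'))
       = hbar' ^+ 2 * (p%:R - i%:R - 1)
   /\ forall s', (1 <= s' <= l)%N -> s' != s ->
     let D := aa N ps r s - aa N ps r s' in
     let lhs := (\prod_(1 <= p' < i.+2) Lplus N ps r L s i p s' p')
       / (\prod_(1 <= p' < i.+1) (nu N ps r L s i p - nu N ps r L s' i p')) in
     let li := lcnt L s' i in
     [/\ lcnt L s' i.+1 = li -> lhs = hbar' * (p%:R - i%:R - 1) - D,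
         lcnt L s' i.+1 = li.+1 -> li = i -> lhs = hbar' * (p%:R - i%:R) - D &
         lcnt L s' i.+1 = li.+1 -> li <> i ->
           lhs = (hbar' * (p%:R - li%:R) - D) * (hbar' * (p%:R - i%:R - 1) - D)
                 / (hbar' * (p%:R - li%:R - 1) - D)])
  /\
  (* (ii) (s,p) \in A_{Lambda,i} *)
  (inS N l ps (shift L s i p (-1)) ->
     (\prod_(1 <= p' < i) Lminus N ps r L s i p s p')
       / (\prod_(1 <= p' < i.+1 | p' != p) (nu N ps r L s i p - nu N ps r L s i p'))
       = - (1 / (p%:R - i%:R - 1))
   /\ forall s', (1 <= s' <= l)%N -> s' != s ->
     let D := aa N ps r s - aa N ps r s' in
     let lhs := (\prod_(1 <= p' < i) Lminus N ps r L s i p s' p')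
       / (\prod_(1 <= p' < i.+1) (nu N ps r L s i p - nu N ps r L s' i p')) in
     let li := lcnt L s' i in
     [/\ lcnt L s' i.-1 = li -> lhs = 1 / (hbar' * (p%:R - i%:R - 1) - D),
         lcnt L s' i.-1 = li.-1 -> (1 <= li)%N -> li = i ->
           lhs = 1 / (hbar' * (p%:R - i%:R) - D) &
         lcnt L s' i.-1 = li.-1 -> (1 <= li)%N -> li <> i ->
           lhs = (hbar' * (p%:R - li%:R - 1) - D)
                 / ((hbar' * (p%:R - li%:R) - D) * (hbar' * (p%:R - i%:R - 1) - D))]).
Proof.
have ltiN : (i < N)%N by lia.
have rs_neq s' : (1 <= s' <= l)%N -> s' != s -> r s != r s'.
  by move=> hs' ne; apply: incr_neq Hr Hs hs' ne.
split=> [HR | HA].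
- have [li li1] := lcnt_raise HL HR Hs ltiN Hp.
  split=> [|s' hs' ne]; first exact (raise_ratio_same r HL Hs Hp ltiN li li1).
  exact (raise_ratio_other HL Hs Hp ltiN li hs' (rs_neq s' hs' ne)).
- have [li lim1] := lcnt_lower HL HA Hs (ltnW ltiN) Hp.
  split=> [|s' hs' ne]; first exact (lower_ratio_same r HL Hs Hp (ltnW ltiN) li lim1).
  exact (lower_ratio_other HL Hs Hp (ltnW ltiN) li hs' (rs_neq s' hs' ne)).
Qed.
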